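(* Let $F$ be any probability distribution on $[0,\infty)$ with finite mean $\mu=\mathbb{E}[S]>0$. Then for every price $p\in\mathbb{R}_+$, $\mathsf{W}(\mu,F)\ge \mathsf{W}(p,F)$; i.e., posting the mean $p^*=\mu$ is a welfare-maximizing fixed price.
   Context: Symmetric bilateral trade: $B,S$ i.i.d. with distribution $F$ (cumulative distribution function also denoted $F$). Posting price $p$, trade occurs iff $B>p\ge S$. Welfare: $\mathsf{W}(p,F)=\mathbb{E}[S]+\mathbb{E}[(B-S)\mathbf 1_{B>p\ge S}]$. *)

From HB Require Import structures.
From mathcomp Require Import all_boot all_order all_algebra.
From mathcomp Require Import all_classical all_reals all_analysis.
Set Implicit Arguments. Unset Strict Implicit. Unset Printing Implicit Defensive.
Import Order.TTheory GRing.Theory Num.Theory.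
Local Open Scope classical_set_scope.
Local Open Scope ring_scope.

(* B and S are i.i.d. with law F, so the joint law of (B,S) is the
   product measure P \x P on R * R, with z.1 = B and z.2 = S. *)
Definition welfare (R : realType) (P : probability R R) (p : R) : \bar R :=
  ((\int[P]_s (s%:E)) +
   \int[(P \x P)%E]_z ((if (p < z.1) && (z.2 <= p) then z.1 - z.2 else 0)%:E))%E.

From HB Require Import structures.
From mathcomp Require Import all_boot all_order all_algebra.
From mathcomp Require Import all_classical all_reals all_analysis.
From mathcomp Require Import measurable_realfun.
From mathcomp Require Import lra ring.
Import Order.TTheory GRing.Theory Num.Theory.
Local Open Scope classical_set_scope.
Local Open Scope ring_scope.

(* Write m for the mean of the value distribution P and 1_{s <= p} for the
   indicator [below p].  By Fubini, integrating out the buyer's value b first,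
   the gains from trade at price p are
       E[(B - S) 1_{B > p >= S}] = E[(m - S) 1_{S <= p}],
   because every integral that occurs is of the form E[(a S + c) w(S)] for an
   affine function and a weight w in {1, 1_{S <= p}}, and these integrals are
   linear in (a, c).  Hence W(p) = m + E[(m - S) 1_{S <= p}], and pointwise
   (m - s) 1_{s <= p} <= (m - s) 1_{s <= m}: the price p = m collects exactly
   the nonnegative part of the integrand. *)

Section welfare_at_the_mean.
Context (R : realType) (P : probability R R).
Hypothesis P_integrable_id : P.-integrable setT (fun x : R => x%:E).

Let E (f : R -> R) : R := Rintegral P setT f.
Let mean : R := E id.

Definition below (p x : R) : R := if x <= p then 1 else 0.

Lemma measurable_below (p : R) : measurable_fun setT (below p).
Proof. by apply: measurable_fun_ifT => //; exact: measurable_fun_ler. Qed.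

Lemma norm_below_le1 (p x : R) : `|below p x| <= 1.
Proof. by rewrite /below; case: ifP; rewrite ?normr1 ?normr0. Qed.

(* Since P has a first moment, anything dominated by a |x| + c is integrable. *)
Lemma integrable_affine_dominated (g : R -> R) (a c : R) :
  measurable_fun setT g -> (forall x, `|g x| <= a * `|x| + c) ->
  P.-integrable setT (EFin \o g).
Proof.
move=> mg g_le.
have int_bound : P.-integrable setT (EFin \o (fun x => a * `|x| + c)).
  have int_norm : P.-integrable setT (EFin \o (Num.norm \o id)).
    exact: integrable_norm.
  have := integrableD measurableT (integrableZl measurableT a int_norm)
    (finite_measure_integrable_cst P c measurableT).
  by apply: eq_integrable.
apply: le_integrable int_bound => //; first exact/measurable_EFinP.
by move=> x _ /=; rewrite lee_fin (le_trans (g_le x)) // ler_norm.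
Qed.

Lemma integral_EFin (f : R -> R) : P.-integrable setT (EFin \o f) ->
  (\int[P]_x (f x)%:E)%E = (E f)%:E.
Proof. by move=> h; rewrite /E /Rintegral fineK //; exact: integrable_fin_num. Qed.

Section weighted_affine.
Variable w : R -> R.
Hypothesis measurable_w : measurable_fun setT w.
Hypothesis norm_w_le1 : forall x, `|w x| <= 1.

Lemma integrable_weighted_affine (a c : R) :
  P.-integrable setT (EFin \o (fun x => (a * x + c) * w x)).
Proof.
apply: (integrable_affine_dominated _ `|a| `|c|).
  apply: (measurable_funM (f := fun x => a * x + c)) => //.
  by apply: measurable_funD => //; exact: measurable_funM.
move=> x; rewrite normrM -[leRHS]mulr1.
by apply: ler_pM => //; rewrite (le_trans (ler_normD _ _)) // normrM.
Qed.

Lemma Rintegral_weighted_affine (a c : R) :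
  E (fun x => (a * x + c) * w x) = a * E (fun x => x * w x) + c * E w.
Proof.
have int_xw : P.-integrable setT (EFin \o (fun x => x * w x)).
  by apply: eq_integrable (integrable_weighted_affine 1 0) => // x _ /=;
     rewrite mul1r addr0.
have int_w : P.-integrable setT (EFin \o w).
  by apply: eq_integrable (integrable_weighted_affine 0 1) => // x _ /=;
     rewrite mul0r add0r mul1r.
rewrite /E (eq_Rintegral _ (g := fun x : R => a * (x * w x) + c * w x)); last first.
  by move=> x _; ring.
rewrite RintegralD //; [|exact: (integrableZl measurableT a int_xw)
                        |exact: (integrableZl measurableT c int_w)].
by rewrite !RintegralZl.
Qed.

End weighted_affine.

Lemma measurable_one : measurable_fun setT (fun _ : R => 1 : R).
Proof. exact: measurable_cst. Qed.

Lemma norm_one_le1 (x : R) : `|(fun _ : R => 1 : R) x| <= 1.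
Proof. by rewrite normr1. Qed.

Lemma Rintegral_affine (a c : R) : E (fun x => a * x + c) = a * mean + c.
Proof.
have -> : E (fun x => a * x + c) = E (fun x => (a * x + c) * 1).
  by apply: eq_Rintegral => x _; rewrite mulr1.
rewrite (Rintegral_weighted_affine _ measurable_one norm_one_le1).
have -> : E (fun x => x * 1) = mean by apply: eq_Rintegral => x _; rewrite mulr1.
have -> : E (fun _ => 1) = 1.
  rewrite /E Rintegral_cst // mul1r -[RHS]/(fine 1%E); congr fine.
  exact: probability_setT.
by rewrite mulr1.
Qed.

Let mass (p : R) : R := E (below p).
Let partial_mean (p : R) : R := E (fun x => x * below p x).

Lemma Rintegral_below (p a c : R) :
  E (fun x => (a * x + c) * below p x) = a * partial_mean p + c * mass p.
Proof. exact: Rintegral_weighted_affine _ (measurable_below p) (norm_below_le1 p) a c. Qed.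

(* Gains when the seller's value is s: integrate out the buyer's value b,
   writing 1_{b > p} = 1 - 1_{b <= p} so that both pieces are weighted affine. *)
Lemma gain_given_seller (p s : R) :
  (\int[P]_b ((if (p < b) && (s <= p) then b - s else 0)%:E))%E =
  (below p s * ((mean - s) - (partial_mean p - s * mass p)))%:E.
Proof.
have int_affine : P.-integrable setT (EFin \o (fun b => (1 * b + - s) * 1)).
  exact: integrable_weighted_affine _ measurable_one norm_one_le1 _ _.
have int_below := integrable_weighted_affine _ (measurable_below p)
  (norm_below_le1 p) 1 (- s).
have int_diff := integrableB measurableT int_affine int_below.
rewrite (eq_integral (fun b : R => (below p s *
    ((1 * b + - s) * 1 - (1 * b + - s) * below p b))%:E)); last first.
  by move=> b _; rewrite /below ltNge; case: (b <= p); case: (s <= p) => /=;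
     rewrite ?mulr1 ?mulr0 ?mul1r ?mul0r ?subr0 ?subrr.
rewrite integral_EFin; last exact: (integrableZl measurableT (below p s) int_diff).
rewrite /E RintegralZl // RintegralB // -/(E _) -/(E _).
have -> : E (fun b => (1 * b + - s) * 1) = E (fun b => 1 * b + - s).
  by apply: eq_Rintegral => x _; rewrite mulr1.
by rewrite Rintegral_affine Rintegral_below; congr EFin; ring.
Qed.

Lemma gains_from_trade (p : R) :
  (\int[(P \x P)%E]_z ((if (p < z.1) && (z.2 <= p) then z.1 - z.2 else 0)%:E))%E =
  (E (fun s => (mean - s) * below p s))%:E.
Proof.
rewrite fubini_tonelli2 //; last 2 first.
- apply/measurable_EFinP; apply: measurable_fun_ifT.
  + by apply: measurable_and; [apply: measurable_fun_ltr|apply: measurable_fun_ler].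
  + by apply: measurable_funB; [exact: measurable_fst|exact: measurable_snd].
  + exact: measurable_cst.
- move=> z; rewrite lee_fin; case: ifP => // /andP[lt_pb le_sp].
  by rewrite subr_ge0 (le_trans le_sp (ltW lt_pb)).
rewrite /fubini_G (eq_integral _ _ (fun s _ => gain_given_seller p s)).
rewrite (eq_integral (fun s : R => ((((mass p - 1) * s + (mean - partial_mean p)))
    * below p s)%:E)); last by move=> s _; congr EFin; ring.
rewrite integral_EFin; last first.
  exact: integrable_weighted_affine _ (measurable_below p) (norm_below_le1 p) _ _.
have -> : (fun s => (mean - s) * below p s) =
    (fun s => (-1 * s + mean) * below p s) by apply/funext => s; ring.
by rewrite !Rintegral_below; congr EFin; ring.
Qed.

Lemma welfare_closed_form (p : R) :
  welfare P p = (mean + E (fun s => (mean - s) * below p s))%:E.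
Proof. by rewrite /welfare gains_from_trade integral_EFin //= EFinD. Qed.

(* For any threshold m, E[(m - S) 1_{S <= p}] is maximized at p = m,
   because the integrand is pointwise maximal there. *)
Lemma signed_gain_max (m p : R) :
  E (fun s => (m - s) * below p s) <= E (fun s => (m - s) * below m s).
Proof.
have int_signed q : P.-integrable setT (EFin \o (fun s => (m - s) * below q s)).
  apply: eq_integrable (integrable_weighted_affine _ (measurable_below q)
    (norm_below_le1 q) (-1) m) => // s _ /=; congr EFin; ring.
apply: le_Rintegral => // s _; rewrite /below.
by case: (leP s p) => _; case: (leP s m) => hsm; rewrite ?mulr1 ?mulr0; lra.
Qed.

End welfare_at_the_mean.

Theorem proposition4 (R : realType) (P : probability R R) (mu : R) :
  P [set x : R | x < 0] = 0%E ->
  P.-integrable setT (fun x : R => x%:E) ->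
  (\int[P]_x (x%:E) = mu%:E)%E ->
  0 < mu ->
  forall p : R, 0 <= p -> (welfare P p <= welfare P mu)%E.
Proof.
move=> _ P_int P_mean _ p _.
have mean_mu : Rintegral P setT id = mu by rewrite /Rintegral P_mean.
rewrite !welfare_closed_form // mean_mu lee_fin lerD2l.
exact: signed_gain_max.
Qed.
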